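(* Let $g(x)=-\log|x|$ on $\mathbb{R}^2$. There exist bounded functions $Q_1,Q_2,Q_3\in C^0(\mathbb{R}^2\setminus\{0\})$ such that for every $\varphi\in C^\infty_c(\mathbb{R}^2;\mathbb{R}^2)$ there exist $G_{1,\varphi},G_{2,\varphi},G_{3,\varphi}\in C^0_0(\mathbb{R}^2\times\mathbb{R}^2)$ with $$\nabla g(x-y)\cdot(\varphi(x)-\varphi(y))=Q_1(x-y)G_{1,\varphi}(x,y)+Q_2(x-y)G_{2,\varphi}(x,y)+Q_3(x-y)G_{3,\varphi}(x,y)$$ for all $x\ne y$; the $Q_i$ do not depend on $\varphi$.
   Context: $C^0_0(\mathbb{R}^2\times\mathbb{R}^2)$ denotes continuous functions vanishing at infinity. *)

From Stdlib Require Import Reals List.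
From Coquelicot Require Import Coquelicot.
Open Scope R_scope.

Definition pt2 := (R * R)%type.

Definition sub2 (x y : pt2) : pt2 := (fst x - fst y, snd x - snd y).
Definition origin2 : pt2 := (0, 0).
Definition norm2 (x : pt2) : R := sqrt (fst x ^ 2 + snd x ^ 2).
Definition norm4 (p : pt2 * pt2) : R :=
  sqrt (fst (fst p) ^ 2 + snd (fst p) ^ 2 + fst (snd p) ^ 2 + snd (snd p) ^ 2).

Definition g (x : pt2) : R := - ln (norm2 x).

Definition pd (b : bool) (f : pt2 -> R) : pt2 -> R :=
  fun p => if b then Derive (fun t => f (t, snd p)) (fst p)
           else Derive (fun t => f (fst p, t)) (snd p).
Definition ex_pd (b : bool) (f : pt2 -> R) (p : pt2) : Prop :=
  if b then ex_derive (fun t => f (t, snd p)) (fst p)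
  else ex_derive (fun t => f (fst p, t)) (snd p).

Definition grad_g (z : pt2) : pt2 := (pd true g z, pd false g z).

Fixpoint iter_pd (ds : list bool) (f : pt2 -> R) : pt2 -> R :=
  match ds with
  | nil => f
  | d :: ds' => pd d (iter_pd ds' f)
  end.

Definition smooth2 (f : pt2 -> R) : Prop :=
  (forall ds p, continuous (iter_pd ds f) p) /\
  (forall ds d p, ex_pd d (iter_pd ds f) p).

Definition compact_support2 (f : pt2 -> R) : Prop :=
  exists M : R, forall p, norm2 p > M -> f p = 0.

Definition Cinf_c (phi : pt2 -> pt2) : Prop :=
  smooth2 (fun p => fst (phi p)) /\ smooth2 (fun p => snd (phi p)) /\
  compact_support2 (fun p => fst (phi p)) /\ compact_support2 (fun p => snd (phi p)).

(* bounded function in C^0(R^2 \ {0}) (values at 0 are irrelevant) *)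
Definition bdd_cont_punctured (Q : pt2 -> R) : Prop :=
  (forall z, z <> origin2 -> continuous Q z) /\
  (exists M : R, forall z, z <> origin2 -> Rabs (Q z) <= M).

Definition C00 (G : pt2 * pt2 -> R) : Prop :=
  (forall p, continuous G p) /\
  (forall eps : R, eps > 0 -> exists M : R,
      forall p, norm4 p > M -> Rabs (G p) < eps).

Definition dot2 (u v : pt2) : R := fst u * fst v + snd u * snd v.

From Stdlib Require Import Reals List RList Lra Psatz Classical ClassicalEpsilon.
From Coquelicot Require Import Coquelicot.
Open Scope R_scope.

(* Write z = x - y, r = |z|^2 and phi = (f1, f2).  Since grad g(z) = -z/r, the left-hand
   side is -T/r with T = z . (phi x - phi y).  Going from x to y along the coordinate path
   x -> (y1, x2) -> y gives f_k x - f_k y = z1 A_k + z2 B_k with continuous, bounded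
   difference quotients A_k, B_k, so T = z1^2 A1 + z1 z2 (B1 + A2) + z2^2 B2.  Take
   Q_ij = -z_i z_j / r, which are bounded, and damp the numerators by 1 + r:
   G1 = (A1 + T)/(1 + r), G2 = (B1 + A2)/(1 + r), G3 = (B2 + T)/(1 + r); then
   sum Q_i G_i = -(T + r T)/(r (1 + r)) = -T/r.  The numerators grow at most linearly in |z|,
   so the G_i decay as |x - y| -> oo, and for bounded |x - y| they vanish once x, y and the
   corner (y1, x2) leave the support of phi. *)

Lemma ball_R (x e y : R) : ball x e y <-> Rabs (y - x) < e.
Proof.
  unfold ball; simpl; unfold AbsRing_ball, abs, minus, plus, opp; simpl; tauto.
Qed.

(* Coquelicot states these for [plus], [mult], ... of a normed module; [apply] does not
   unify those with [Rplus], [Rmult], ..., hence the real-valued restatements. *)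
Section RealValuedContinuity.
Context {T : UniformSpace}.

Lemma continuous_Rplus (f g : T -> R) x :
  continuous f x -> continuous g x -> continuous (fun y => f y + g y) x.
Proof. exact (continuous_plus f g x). Qed.

Lemma continuous_Ropp (f : T -> R) x :
  continuous f x -> continuous (fun y => - f y) x.
Proof. exact (continuous_opp f x). Qed.

Lemma continuous_Rminus (f g : T -> R) x :
  continuous f x -> continuous g x -> continuous (fun y => f y - g y) x.
Proof. exact (continuous_minus f g x). Qed.

Lemma continuous_Rmult (f g : T -> R) x :
  continuous f x -> continuous g x -> continuous (fun y => f y * g y) x.
Proof. exact (continuous_mult f g x). Qed.

Lemma continuous_Rdiv (f g : T -> R) x :
  continuous f x -> continuous g x -> g x <> 0 -> continuous (fun y => f y / g y) x.
Proof.
  intros Hf Hg Hg0. apply continuous_Rmult; [exact Hf|].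
  apply (continuous_comp g Rinv); [exact Hg | exact (continuous_Rinv _ Hg0)].
Qed.

Lemma continuous_R_eps (f : T -> R) x :
  continuous f x <-> forall eps : posreal, locally x (fun y => Rabs (f y - f x) < eps).
Proof.
  unfold continuous; rewrite filterlim_locally.
  split; intros H eps; generalize (H eps); apply filter_imp; intros y; apply ball_R.
Qed.

Lemma continuous_locally_neq0 (f : T -> R) x :
  continuous f x -> f x <> 0 -> locally x (fun y => f y <> 0).
Proof.
  intros Hf Hx.
  assert (Hpos : 0 < Rabs (f x)) by (apply Rabs_pos_lt; exact Hx).
  apply (filter_imp (fun y => Rabs (f y - f x) < Rabs (f x))).
  - intros y Hy Hy0. rewrite Hy0, Rminus_0_l, Rabs_Ropp in Hy. lra.
  - exact (proj1 (continuous_R_eps f x) Hf (mkposreal _ Hpos)).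
Qed.

End RealValuedContinuity.

Lemma continuous_fst_at {U V : UniformSpace} (p : U * V) : continuous fst p.
Proof. destruct p; apply continuous_fst. Qed.

Lemma continuous_snd_at {U V : UniformSpace} (p : U * V) : continuous snd p.
Proof. destruct p; apply continuous_snd. Qed.

Lemma continuous_fst_comp {U V W : UniformSpace} (h : U -> W) (p : U * V) :
  continuous h (fst p) -> continuous (fun p => h (fst p)) p.
Proof. intros Hh; apply continuous_comp; [apply continuous_fst_at | exact Hh]. Qed.

Lemma continuous_snd_comp {U V W : UniformSpace} (h : V -> W) (p : U * V) :
  continuous h (snd p) -> continuous (fun p => h (snd p)) p.
Proof. intros Hh; apply continuous_comp; [apply continuous_snd_at | exact Hh]. Qed.

Ltac continuity_R :=
  repeat match goal with
  | |- continuous (fun _ => ?c) _ => apply continuous_const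
  | |- continuous (fun _ => _ + _) _ => apply continuous_Rplus
  | |- continuous (fun _ => _ - _) _ => apply continuous_Rminus
  | |- continuous (fun _ => _ * _) _ => apply continuous_Rmult
  | |- continuous (fun _ => - _) _ => apply continuous_Ropp
  | |- continuous fst _ => apply continuous_fst_at
  | |- continuous snd _ => apply continuous_snd_at
  | |- continuous (fun p => _ (fst p)) _ => apply continuous_fst_comp
  | |- continuous (fun p => _ (snd p)) _ => apply continuous_snd_comp
  end.

Lemma between_close a b c x d :
  Rmin a b <= c <= Rmax a b -> Rabs (a - x) < d -> Rabs (b - x) < d -> Rabs (c - x) < d.
Proof.
  unfold Rmin, Rmax; destruct (Rle_dec a b); intros [Hl Hr] Ha Hb;
    apply Rabs_def2 in Ha; apply Rabs_def2 in Hb; apply Rabs_def1; lra.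
Qed.

Section DividedDifference.
Variables F dF : R -> R -> R.

Definition divdiff (s t u : R) : R :=
  if Req_EM_T s t then dF s u else (F s u - F t u) / (s - t).

Lemma divdiff_spec s t u : F s u - F t u = (s - t) * divdiff s t u.
Proof. unfold divdiff; destruct (Req_EM_T s t) as [->|Hst]; [ring | field; lra]. Qed.

Lemma divdiff_eq0 s t u : F s u = 0 -> F t u = 0 -> dF s u = 0 -> divdiff s t u = 0.
Proof.
  intros Hs Ht Hd; unfold divdiff; destruct (Req_EM_T s t); [exact Hd|].
  rewrite Hs, Ht; field; lra.
Qed.

Hypothesis F_derive : forall s u, is_derive (fun t => F t u) s (dF s u).

Lemma divdiff_mvt s t u : exists c, Rmin t s <= c <= Rmax t s /\ divdiff s t u = dF c u.
Proof.
  unfold divdiff; destruct (Req_EM_T s t) as [->|Hst].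
  - exists t; split; [split; [apply Rmin_l | apply Rmax_l] | reflexivity].
  - destruct (MVT_gen (fun r => F r u) t s (fun c => dF c u)) as (c & Hc & Hmvt).
    + intros r _; apply F_derive.
    + intros r _; apply continuity_pt_filterlim, (ex_derive_continuous (fun r => F r u)).
      eexists; apply F_derive.
    + exists c; split; [exact Hc|]. rewrite Hmvt; field; lra.
Qed.

Lemma divdiff_bound D : (forall s u, Rabs (dF s u) <= D) ->
  forall s t u, Rabs (divdiff s t u) <= D.
Proof. intros HD s t u; destruct (divdiff_mvt s t u) as (c & _ & ->); apply HD. Qed.

Hypothesis F_cont : forall q, continuous (fun q : R * R => F (fst q) (snd q)) q.
Hypothesis dF_cont : forall q, continuous (fun q : R * R => dF (fst q) (snd q)) q.

Lemma continuous_divdiff {T : UniformSpace} (s t u : T -> R) w :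
  continuous s w -> continuous t w -> continuous u w ->
  continuous (fun w => divdiff (s w) (t w) (u w)) w.
Proof.
  intros Hs Ht Hu.
  destruct (Req_EM_T (s w) (t w)) as [Est|Nst].
  - (* on the diagonal, the mean value theorem reduces continuity to that of dF *)
    apply continuous_R_eps; intros eps.
    destruct (proj1 (continuous_R_eps _ _) (dF_cont (s w, u w)) eps) as [d Hd].
    generalize (filter_and _ _ (proj1 (continuous_R_eps _ _) Hs d)
                 (filter_and _ _ (proj1 (continuous_R_eps _ _) Ht d)
                                 (proj1 (continuous_R_eps _ _) Hu d))).
    apply filter_imp; intros w' (H1 & H2 & H3).
    unfold divdiff at 2; destruct (Req_EM_T (s w) (t w)); [|contradiction].
    destruct (divdiff_mvt (s w') (t w') (u w')) as (c & Hc & ->).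
    apply (Hd (c, u w')); split; apply ball_R; simpl; [|exact H3].
    rewrite Est in H1 |- *; exact (between_close _ _ _ _ _ Hc H2 H1).
  - apply (continuous_ext_loc _ (fun w => (F (s w) (u w) - F (t w) (u w)) / (s w - t w))).
    + apply (filter_imp (fun w => s w - t w <> 0)).
      * intros w' Hw'; unfold divdiff; destruct (Req_EM_T (s w') (t w')); [lra | reflexivity].
      * apply continuous_locally_neq0; [apply continuous_Rminus; assumption | lra].
    + apply continuous_Rdiv; [apply continuous_Rminus | apply continuous_Rminus; assumption | lra];
        apply (continuous_comp_2 _ _ F); auto.
Qed.

End DividedDifference.

Lemma continuous_bounded_on_square (f : pt2 -> R) S :
  (forall q, continuous f q) ->
  exists B, forall q, Rabs (fst q) <= S -> Rabs (snd q) <= S -> Rabs (f q) <= B.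
Proof.
  intros Hf.
  assert (Hloc : forall t : Compactness.Tn 2 R, exists d : posreal, forall q : pt2,
    Rabs (fst q - fst t) < d -> Rabs (snd q - fst (snd t)) < d ->
    Rabs (f q - f (fst t, fst (snd t))) < 1).
  { intros t.
    destruct (proj1 (continuous_R_eps _ _) (Hf (fst t, fst (snd t))) (mkposreal 1 Rlt_0_1))
      as [d Hd].
    exists d; intros q H1 H2; apply Hd; split; apply ball_R; assumption. }
  pose (delta t := proj1_sig (constructive_indefinite_description _ (Hloc t))).
  (* finitely many of these balls cover the square, and f is bounded on each *)
  apply NNPP; intros Hno.
  apply (compactness_list 2 (-S, (-S, tt)) (S, (S, tt)) delta); intros [l Hl]; apply Hno.
  exists (MaxRlist (map (fun t => Rabs (f (fst t, fst (snd t))) + 1) l)).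
  intros [q1 q2] H1 H2.
  destruct (Hl (q1, (q2, tt))) as ([t1 [t2 []]] & Hin & _ & Hclose).
  { apply Rabs_le_between in H1, H2; simpl; tauto. }
  destruct Hclose as (Hc1 & Hc2 & _).
  pose proof (MaxRlist_P1 _ _ (in_map (fun t => Rabs (f (fst t, fst (snd t))) + 1) _ _ Hin)).
  pose proof (proj2_sig (constructive_indefinite_description _ (Hloc (t1, (t2, tt))))
                (q1, q2) Hc1 Hc2).
  simpl in *. pose proof (Rabs_triang_inv (f (q1, q2)) (f (t1, t2))). lra.
Qed.

Definition off_square (S : R) (q : pt2) : Prop := S < Rabs (fst q) \/ S < Rabs (snd q).

Definition vanishes_off_square (f : pt2 -> R) (S : R) : Prop :=
  forall q, off_square S q -> f q = 0.

Lemma off_square_mono S S' q : S <= S' -> off_square S' q -> off_square S q.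
Proof. unfold off_square; lra. Qed.

Lemma Rabs_le_norm2 q : Rabs (fst q) <= norm2 q /\ Rabs (snd q) <= norm2 q.
Proof.
  unfold norm2; rewrite <- (sqrt_pow2 (Rabs (fst q))), <- (sqrt_pow2 (Rabs (snd q)))
    by apply Rabs_pos.
  rewrite <- !Rsqr_pow2, <- !Rsqr_abs, !Rsqr_pow2.
  split; apply sqrt_le_1_alt; pose proof (pow2_ge_0 (fst q)); pose proof (pow2_ge_0 (snd q)); lra.
Qed.

Lemma vanishes_off_square_of_compact_support f :
  compact_support2 f -> exists S, vanishes_off_square f S.
Proof.
  intros [M HM]; exists M; intros q Hq; apply HM.
  destruct (Rabs_le_norm2 q); destruct Hq; lra.
Qed.

Lemma Derive_locally_zero (h : R -> R) x : locally x (fun t => h t = 0) -> Derive h x = 0.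
Proof. intros H; rewrite (Derive_ext_loc _ (fun _ => 0) _ H); apply Derive_const. Qed.

Lemma locally_lt_Rabs S a : S < Rabs a -> locally a (fun t => S < Rabs t).
Proof.
  intros Ha. assert (Hpos : 0 < Rabs a - S) by lra.
  generalize (proj1 (continuous_R_eps Rabs a) (continuous_Rabs a) (mkposreal _ Hpos)).
  apply filter_imp; simpl; intros t Ht.
  pose proof (Rabs_triang_inv (Rabs a) (Rabs t)); rewrite Rabs_minus_sym in Ht.
  pose proof (Rle_abs (Rabs a - Rabs t)); lra.
Qed.

Lemma vanishes_off_square_pd f S b :
  vanishes_off_square f S -> vanishes_off_square (pd b f) S.
Proof.
  intros Hf [q1 q2] Hq; destruct b; apply Derive_locally_zero; simpl in *;
    destruct Hq as [Hq|Hq];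
    solve [ apply filter_forall; intros t; apply Hf; unfold off_square; simpl; auto
          | generalize (locally_lt_Rabs _ _ Hq); apply filter_imp; intros t Ht;
            apply Hf; unfold off_square; simpl; auto ].
Qed.

Lemma bounded_of_vanishes_off_square f S :
  (forall q, continuous f q) -> vanishes_off_square f S -> exists B, forall q, Rabs (f q) <= B.
Proof.
  intros Hf HS; destruct (continuous_bounded_on_square f S Hf) as [B HB].
  exists (Rmax B 0); intros q.
  destruct (Rle_lt_dec (Rabs (fst q)) S), (Rle_lt_dec (Rabs (snd q)) S).
  - apply Rle_trans with B; [apply HB; assumption | apply Rmax_l].
  all: rewrite HS by (unfold off_square; auto); rewrite Rabs_R0; apply Rmax_r.
Qed.

Lemma dot2_self_pos z : z <> origin2 -> 0 < dot2 z z.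
Proof.
  destruct z as [a b]; unfold dot2, origin2; simpl; intros Hz.
  destruct (Req_dec a 0) as [->|Ha]; [destruct (Req_dec b 0) as [->|Hb]; [congruence|nra] | nra].
Qed.

Lemma grad_g_eq z : z <> origin2 -> grad_g z = (- fst z / dot2 z z, - snd z / dot2 z z).
Proof.
  intros Hz; pose proof (dot2_self_pos z Hz) as Hr.
  destruct z as [a b]; unfold dot2 in Hr; simpl in Hr.
  assert (Hs : 0 < sqrt (a * a + b * b)) by (apply sqrt_lt_R0; lra).
  assert (Hss : sqrt (a * a + b * b) * sqrt (a * a + b * b) = a * a + b * b)
    by (apply sqrt_sqrt; lra).
  unfold grad_g, pd, g, norm2, dot2; simpl; f_equal; apply is_derive_unique; auto_derive.
  all: replace (a * (a * 1) + b * (b * 1)) with (a * a + b * b) by ring.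
  all: try (split; [lra | split; [exact Hs | exact I]]).
  all: set (s := sqrt (a * a + b * b)) in *; rewrite <- Hss; field; lra.
Qed.

Definition Q11 (z : pt2) : R := - (fst z * fst z) / dot2 z z.
Definition Q12 (z : pt2) : R := - (fst z * snd z) / dot2 z z.
Definition Q22 (z : pt2) : R := - (snd z * snd z) / dot2 z z.

Lemma bdd_cont_punctured_quadratic (h : pt2 -> R) :
  (forall z, continuous h z) -> (forall z, Rabs (h z) <= dot2 z z) ->
  bdd_cont_punctured (fun z => h z / dot2 z z).
Proof.
  intros Hc Hb; split.
  - intros z Hz; apply continuous_Rdiv; [apply Hc | unfold dot2; continuity_R |].
    apply Rgt_not_eq, dot2_self_pos, Hz.
  - exists 1; intros z Hz; pose proof (dot2_self_pos z Hz).
    rewrite Rabs_div by (apply Rgt_not_eq; lra).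
    rewrite (Rabs_pos_eq (dot2 z z)) by lra.
    apply Rle_div_l; [lra | rewrite Rmult_1_l; apply Hb].
Qed.

Lemma Q11_bdd : bdd_cont_punctured Q11.
Proof.
  apply (bdd_cont_punctured_quadratic (fun z => - (fst z * fst z))); [intros; continuity_R|].
  intros [a b]; unfold dot2; simpl; rewrite Rabs_Ropp.
  pose proof (Rle_0_sqr a); pose proof (Rle_0_sqr b); unfold Rsqr in *.
  rewrite Rabs_pos_eq; lra.
Qed.

Lemma Q12_bdd : bdd_cont_punctured Q12.
Proof.
  apply (bdd_cont_punctured_quadratic (fun z => - (fst z * snd z))); [intros; continuity_R|].
  intros [a b]; unfold dot2; simpl; rewrite Rabs_Ropp.
  pose proof (Rle_0_sqr (a + b)); pose proof (Rle_0_sqr (a - b)); unfold Rsqr in *.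
  apply Rabs_le; split; lra.
Qed.

Lemma Q22_bdd : bdd_cont_punctured Q22.
Proof.
  apply (bdd_cont_punctured_quadratic (fun z => - (snd z * snd z))); [intros; continuity_R|].
  intros [a b]; unfold dot2; simpl; rewrite Rabs_Ropp.
  pose proof (Rle_0_sqr a); pose proof (Rle_0_sqr b); unfold Rsqr in *.
  rewrite Rabs_pos_eq; lra.
Qed.

(* The numerators N for which [damp N] lies in C^0_0 (lemma [C00_damp]); the point
   (fst y, snd x) is the corner of the coordinate path from x to y. *)
Definition tame_kernel (N : pt2 -> pt2 -> R) : Prop :=
  (forall p : pt2 * pt2, continuous (fun p => N (fst p) (snd p)) p) /\
  (exists K, forall x y,
     Rabs (N x y) <= K * (1 + Rabs (fst x - fst y) + Rabs (snd x - snd y))) /\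
  (exists S, forall x y,
     off_square S x -> off_square S y -> off_square S (fst y, snd x) -> N x y = 0).

Definition damp (N : pt2 -> pt2 -> R) (p : pt2 * pt2) : R :=
  N (fst p) (snd p) / (1 + dot2 (sub2 (fst p) (snd p)) (sub2 (fst p) (snd p))).

Lemma one_plus_dot2_self_pos z : 0 < 1 + dot2 z z.
Proof.
  unfold dot2; pose proof (Rle_0_sqr (fst z)); pose proof (Rle_0_sqr (snd z)).
  unfold Rsqr in *; lra.
Qed.

Lemma tame_kernel_plus N M :
  tame_kernel N -> tame_kernel M -> tame_kernel (fun x y => N x y + M x y).
Proof.
  intros (HcN & [KN HN] & [SN HzN]) (HcM & [KM HM] & [SM HzM]); split; [|split].
  - intros p; apply continuous_Rplus; auto.
  - exists (KN + KM); intros x y; rewrite Rmult_plus_distr_r.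
    eapply Rle_trans; [apply Rabs_triang | apply Rplus_le_compat; auto].
  - exists (Rmax SN SM); intros x y Hx Hy Hc.
    rewrite HzN, HzM; try ring; eapply off_square_mono; try eassumption;
      solve [apply Rmax_l | apply Rmax_r].
Qed.

Lemma damped_le N K a b :
  Rabs N <= K * (1 + Rabs a + Rabs b) ->
  Rabs (N / (1 + (a * a + b * b))) <= 3 * K / (1 + Rabs a + Rabs b).
Proof.
  intros HN.
  pose proof (Rabs_pos a); pose proof (Rabs_pos b); pose proof (Rabs_pos N).
  assert (Ha : a * a = Rabs a * Rabs a) by (rewrite <- Rabs_mult, Rabs_pos_eq; nra).
  assert (Hb : b * b = Rabs b * Rabs b) by (rewrite <- Rabs_mult, Rabs_pos_eq; nra).
  rewrite Ha, Hb; set (u := Rabs a) in *; set (v := Rabs b) in *.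
  assert (HK : 0 <= K) by nra.
  assert (Hsq : (1 + u + v) * (1 + u + v) <= 3 * (1 + (u * u + v * v))).
  { pose proof (Rle_0_sqr (u - 1)); pose proof (Rle_0_sqr (v - 1));
      pose proof (Rle_0_sqr (u - v)); unfold Rsqr in *; lra. }
  rewrite Rabs_div by (apply Rgt_not_eq; nra).
  rewrite (Rabs_pos_eq (1 + _)) by nra.
  apply Rle_div_l; [nra|].
  apply Rle_trans with (K * (1 + u + v)); [exact HN|].
  apply Rmult_le_reg_r with (1 + u + v); [lra|].
  replace (3 * K / (1 + u + v) * (1 + (u * u + v * v)) * (1 + u + v))
    with (3 * K * (1 + (u * u + v * v))) by (field; lra).
  nra.
Qed.

Lemma norm4_gt_coord p c :
  2 * c < norm4 p ->
  c < Rabs (fst (fst p)) \/ c < Rabs (snd (fst p)) \/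
  c < Rabs (fst (snd p)) \/ c < Rabs (snd (snd p)).
Proof.
  intros Hp; destruct p as [[x1 x2] [y1 y2]]; cbn [fst snd] in *.
  destruct (Rlt_le_dec c (Rabs x1)); [now left|].
  destruct (Rlt_le_dec c (Rabs x2)); [now right; left|].
  destruct (Rlt_le_dec c (Rabs y1)); [now right; right; left|].
  destruct (Rlt_le_dec c (Rabs y2)); [now right; right; right|].
  exfalso; apply (Rlt_not_le _ _ Hp); unfold norm4; cbn [fst snd].
  pose proof (Rabs_pos x1).
  rewrite <- (sqrt_pow2 (2 * c)) by lra.
  apply sqrt_le_1_alt.
  rewrite <- (pow2_abs x1), <- (pow2_abs x2), <- (pow2_abs y1), <- (pow2_abs y2).
  pose proof (Rabs_pos x2); pose proof (Rabs_pos y1); pose proof (Rabs_pos y2); nra.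
Qed.

Lemma off_square_near (x y : pt2) S rho :
  Rabs (fst x - fst y) < rho -> Rabs (snd x - snd y) < rho ->
  S + rho < Rabs (fst x) \/ S + rho < Rabs (snd x) \/
  S + rho < Rabs (fst y) \/ S + rho < Rabs (snd y) ->
  off_square S x /\ off_square S y /\ off_square S (fst y, snd x).
Proof.
  destruct x as [x1 x2], y as [y1 y2]; unfold off_square; simpl; intros H1 H2 H.
  pose proof (Rabs_triang_inv x1 y1); pose proof (Rabs_triang_inv y1 x1);
  pose proof (Rabs_triang_inv x2 y2); pose proof (Rabs_triang_inv y2 x2);
  rewrite (Rabs_minus_sym y1), (Rabs_minus_sym y2) in *;
  pose proof (Rabs_pos (x1 - y1)); pose proof (Rabs_pos (x2 - y2)).
  destruct H as [H|[H|[H|H]]];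
    solve [split; [|split]; left; lra | split; [|split]; right; lra].
Qed.

Lemma C00_damp N : tame_kernel N -> C00 (damp N).
Proof.
  intros (Hc & [K HK] & [S HS]); split.
  - intros p; apply continuous_Rdiv; [apply Hc | unfold dot2, sub2; simpl; continuity_R |].
    apply Rgt_not_eq, one_plus_dot2_self_pos.
  - intros eps Heps.
    assert (K0 : 0 <= K).
    { specialize (HK origin2 origin2); unfold origin2 in HK; simpl in HK.
      rewrite Rminus_0_r, Rabs_R0 in HK; pose proof (Rabs_pos (N (0, 0) (0, 0))); lra. }
    set (rho := 3 * K / eps).
    assert (Hrho : eps * rho = 3 * K) by (unfold rho; field; lra).
    assert (rho0 : 0 <= rho)
      by (unfold rho; apply Rmult_le_pos; [lra | apply Rlt_le, Rinv_0_lt_compat; lra]).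
    exists (2 * (S + rho)); intros [x y] Hn; unfold damp, dot2, sub2; simpl.
    pose proof (Rabs_pos (fst x - fst y)); pose proof (Rabs_pos (snd x - snd y)).
    destruct (Rle_lt_dec rho (Rabs (fst x - fst y) + Rabs (snd x - snd y))) as [Hfar|Hnear].
    + (* far from the diagonal, linear growth loses against quadratic damping *)
      eapply Rle_lt_trans; [apply damped_le, HK|].
      apply Rlt_div_l; [lra|].
      assert (eps * rho <= eps * (Rabs (fst x - fst y) + Rabs (snd x - snd y)))
        by (apply Rmult_le_compat_l; lra).
      lra.
    + (* near the diagonal, x, y and the corner all leave the square *)
      apply norm4_gt_coord in Hn; simpl in Hn.
      destruct (off_square_near x y S rho) as (Hx & Hy & Hxy); [lra | lra | exact Hn |].
      rewrite (HS x y Hx Hy Hxy); unfold Rdiv; rewrite Rmult_0_l, Rabs_R0; exact Heps.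
Qed.

Definition slope1 (f : pt2 -> R) (x y : pt2) : R :=
  divdiff (fun s u => f (s, u)) (fun s u => pd true f (s, u)) (fst x) (fst y) (snd x).

Definition slope2 (f : pt2 -> R) (x y : pt2) : R :=
  divdiff (fun s u => f (u, s)) (fun s u => pd false f (u, s)) (snd x) (snd y) (fst y).

Lemma slope_decomposition f x y :
  f x - f y = (fst x - fst y) * slope1 f x y + (snd x - snd y) * slope2 f x y.
Proof.
  destruct x as [x1 x2], y as [y1 y2]; unfold slope1, slope2; simpl.
  rewrite <- (divdiff_spec (fun s u => f (s, u))), <- (divdiff_spec (fun s u => f (u, s))).
  ring.
Qed.

Lemma continuous_uncurried (h : pt2 -> R) :
  (forall q, continuous h q) -> forall q, continuous (fun q : R * R => h (fst q, snd q)) q.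
Proof. intros H q; apply (continuous_ext h); [intros [a b]; reflexivity | apply H]. Qed.

Lemma continuous_swapped (h : pt2 -> R) :
  (forall q, continuous h q) -> forall q, continuous (fun q : R * R => h (snd q, fst q)) q.
Proof.
  intros H q; apply (continuous_comp_2 snd fst (fun a b => h (a, b)));
    [apply continuous_snd_at | apply continuous_fst_at | apply continuous_uncurried, H].
Qed.

Lemma Rabs_le_linear X D a b : Rabs X <= D -> Rabs X <= D * (1 + Rabs a + Rabs b).
Proof.
  intros H; pose proof (Rabs_pos X); pose proof (Rabs_pos a); pose proof (Rabs_pos b); nra.
Qed.

Section C1Slopes.
Variable f : pt2 -> R.
Hypothesis f_cont : forall q, continuous f q.
Hypothesis pd_cont : forall b q, continuous (pd b f) q.
Hypothesis pd_ex : forall b q, ex_pd b f q.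
Hypothesis f_supp : compact_support2 f.

Lemma is_derive_pd1 s u : is_derive (fun t => f (t, u)) s (pd true f (s, u)).
Proof. exact (Derive_correct _ _ (pd_ex true (s, u))). Qed.

Lemma is_derive_pd2 s u : is_derive (fun t => f (u, t)) s (pd false f (u, s)).
Proof. exact (Derive_correct _ _ (pd_ex false (u, s))). Qed.

Lemma slope1_tame : tame_kernel (slope1 f).
Proof.
  destruct (vanishes_off_square_of_compact_support f f_supp) as [S HS].
  split; [|split].
  - intros p; unfold slope1.
    apply (continuous_divdiff (fun s u => f (s, u)) (fun s u => pd true f (s, u)));
      [exact is_derive_pd1 | apply continuous_uncurried, f_cont
      | apply continuous_uncurried, pd_cont | continuity_R ..].
  - destruct (bounded_of_vanishes_off_square (pd true f) S (pd_cont true)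
                (vanishes_off_square_pd f S true HS)) as [D HD].
    exists D; intros x y; apply Rabs_le_linear.
    apply (divdiff_bound _ _ is_derive_pd1); intros s u; apply HD.
  - exists S; intros [x1 x2] [y1 y2] Hx Hy Hc; unfold slope1; cbn [fst snd] in *.
    apply divdiff_eq0;
      [exact (HS _ Hx) | exact (HS _ Hc) | exact (vanishes_off_square_pd f S true HS _ Hx)].
Qed.

Lemma slope2_tame : tame_kernel (slope2 f).
Proof.
  destruct (vanishes_off_square_of_compact_support f f_supp) as [S HS].
  split; [|split].
  - intros p; unfold slope2.
    apply (continuous_divdiff (fun s u => f (u, s)) (fun s u => pd false f (u, s)));
      [exact is_derive_pd2 | apply continuous_swapped, f_cont
      | apply continuous_swapped, pd_cont | continuity_R ..].
  - destruct (bounded_of_vanishes_off_square (pd false f) S (pd_cont false)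
                (vanishes_off_square_pd f S false HS)) as [D HD].
    exists D; intros x y; apply Rabs_le_linear.
    apply (divdiff_bound _ _ is_derive_pd2); intros s u; apply HD.
  - exists S; intros [x1 x2] [y1 y2] Hx Hy Hc; unfold slope2; cbn [fst snd] in *.
    apply divdiff_eq0;
      [exact (HS _ Hc) | exact (HS _ Hy) | exact (vanishes_off_square_pd f S false HS _ Hc)].
Qed.

End C1Slopes.

Definition coupling (f1 f2 : pt2 -> R) (x y : pt2) : R :=
  (fst x - fst y) * (f1 x - f1 y) + (snd x - snd y) * (f2 x - f2 y).

Lemma coupling_tame f1 f2 :
  (forall q, continuous f1 q) -> (forall q, continuous f2 q) ->
  compact_support2 f1 -> compact_support2 f2 -> tame_kernel (coupling f1 f2).
Proof.
  intros Hc1 Hc2 Hs1 Hs2.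
  destruct (vanishes_off_square_of_compact_support f1 Hs1) as [S1 HS1].
  destruct (vanishes_off_square_of_compact_support f2 Hs2) as [S2 HS2].
  destruct (bounded_of_vanishes_off_square f1 S1 Hc1 HS1) as [C1 HC1].
  destruct (bounded_of_vanishes_off_square f2 S2 Hc2 HS2) as [C2 HC2].
  split; [|split].
  - intros p; unfold coupling; continuity_R; auto.
  - exists (2 * (C1 + C2)); intros x y; unfold coupling.
    assert (H1 : Rabs (f1 x - f1 y) <= 2 * C1).
    { pose proof (Rabs_triang (f1 x) (- f1 y)); rewrite Rabs_Ropp in *;
        pose proof (HC1 x); pose proof (HC1 y); unfold Rminus; lra. }
    assert (H2 : Rabs (f2 x - f2 y) <= 2 * C2).
    { pose proof (Rabs_triang (f2 x) (- f2 y)); rewrite Rabs_Ropp in *;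
        pose proof (HC2 x); pose proof (HC2 y); unfold Rminus; lra. }
    eapply Rle_trans; [apply Rabs_triang|]; rewrite !Rabs_mult.
    pose proof (Rabs_pos (fst x - fst y)); pose proof (Rabs_pos (snd x - snd y)).
    pose proof (Rabs_pos (f1 x - f1 y)); pose proof (Rabs_pos (f2 x - f2 y)); nra.
  - exists (Rmax S1 S2); intros x y Hx Hy _; unfold coupling.
    rewrite (HS1 x), (HS1 y), (HS2 x), (HS2 y); try ring;
      eapply off_square_mono; try eassumption; solve [apply Rmax_l | apply Rmax_r].
Qed.

Definition kernel11 (f1 f2 : pt2 -> R) (x y : pt2) : R := slope1 f1 x y + coupling f1 f2 x y.
Definition kernel12 (f1 f2 : pt2 -> R) (x y : pt2) : R := slope2 f1 x y + slope1 f2 x y.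
Definition kernel22 (f1 f2 : pt2 -> R) (x y : pt2) : R := slope2 f2 x y + coupling f1 f2 x y.

Lemma smooth2_C1 f : smooth2 f ->
  (forall q, continuous f q) /\ (forall b q, continuous (pd b f) q) /\ (forall b q, ex_pd b f q).
Proof.
  intros [Hc Hd]; split; [|split];
    [exact (Hc nil) | exact (fun b => Hc (b :: nil)) | exact (Hd nil)].
Qed.

Lemma kernels_tame f1 f2 :
  smooth2 f1 -> smooth2 f2 -> compact_support2 f1 -> compact_support2 f2 ->
  tame_kernel (kernel11 f1 f2) /\ tame_kernel (kernel12 f1 f2) /\ tame_kernel (kernel22 f1 f2).
Proof.
  intros Hs1 Hs2 Hc1 Hc2.
  destruct (smooth2_C1 f1 Hs1) as (c1 & dc1 & d1).
  destruct (smooth2_C1 f2 Hs2) as (c2 & dc2 & d2).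
  pose proof (coupling_tame f1 f2 c1 c2 Hc1 Hc2).
  split; [|split]; apply tame_kernel_plus; auto using slope1_tame, slope2_tame.
Qed.

Lemma sub2_neq_origin x y : x <> y -> sub2 x y <> origin2.
Proof.
  destruct x as [x1 x2], y as [y1 y2]; unfold sub2, origin2; simpl; intros Hxy E.
  injection E; intros; apply Hxy; f_equal; lra.
Qed.

(* With T = coupling, the identity reads -T/r = -(T + r T) / (r (1 + r)). *)
Lemma grad_g_dot_decomposition f1 f2 x y : x <> y ->
  dot2 (grad_g (sub2 x y)) (f1 x - f1 y, f2 x - f2 y) =
    Q11 (sub2 x y) * damp (kernel11 f1 f2) (x, y) + Q12 (sub2 x y) * damp (kernel12 f1 f2) (x, y)
    + Q22 (sub2 x y) * damp (kernel22 f1 f2) (x, y).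
Proof.
  intros Hxy; pose proof (sub2_neq_origin x y Hxy) as Hz.
  pose proof (dot2_self_pos _ Hz) as Hr.
  rewrite grad_g_eq by exact Hz.
  unfold damp, kernel11, kernel12, kernel22, coupling, Q11, Q12, Q22; simpl.
  rewrite (slope_decomposition f1 x y), (slope_decomposition f2 x y).
  unfold dot2, sub2 in *; simpl in *; field; lra.
Qed.

Theorem lemma6p2 :
  exists Q1 Q2 Q3 : pt2 -> R,
    bdd_cont_punctured Q1 /\ bdd_cont_punctured Q2 /\ bdd_cont_punctured Q3 /\
    forall phi : pt2 -> pt2, Cinf_c phi ->
      exists G1 G2 G3 : pt2 * pt2 -> R,
        C00 G1 /\ C00 G2 /\ C00 G3 /\
        forall x y : pt2, x <> y ->
          dot2 (grad_g (sub2 x y)) (sub2 (phi x) (phi y)) =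
            Q1 (sub2 x y) * G1 (x, y) + Q2 (sub2 x y) * G2 (x, y)
            + Q3 (sub2 x y) * G3 (x, y).
Proof.
  exists Q11, Q12, Q22.
  split; [exact Q11_bdd | split; [exact Q12_bdd | split; [exact Q22_bdd |]]].
  intros phi (Hs1 & Hs2 & Hc1 & Hc2).
  pose (f1 q := fst (phi q)); pose (f2 q := snd (phi q)).
  destruct (kernels_tame f1 f2 Hs1 Hs2 Hc1 Hc2) as (H11 & H12 & H22).
  exists (damp (kernel11 f1 f2)), (damp (kernel12 f1 f2)), (damp (kernel22 f1 f2)).
  split; [|split; [|split]]; try (apply C00_damp; assumption).
  intros x y Hxy; exact (grad_g_dot_decomposition f1 f2 x y Hxy).
Qed.
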